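(* Let $\mathbf M$ be an $(N+1,k)$-admissible and micro-reversible matrix with core $\widetilde{\mathbf M}$ and characteristic triple $(\mu,\widetilde{\mathbf w},\widetilde{\mathbf z})$, let $\mathbf K:=\frac1\mu\operatorname{diag}(\widetilde{\mathbf w})^{-1}\widetilde{\mathbf M}^\dagger\operatorname{diag}(\widetilde{\mathbf w})$ and $\boldsymbol\pi:=\widetilde{\mathbf w}\circ\widetilde{\mathbf z}$. Let $\widetilde{\mathbf p}:[0,\infty)\to\mathbb R^{N+1-k}$ solve $\frac{d\widetilde{\mathbf p}}{dt}=(\widetilde{\mathbf M}-\mathbf I)\widetilde{\mathbf p}$ with $\widetilde{\mathbf p}(0)$ nonnegative and nonzero, and define $$\mathbf q(t):=\frac{\widetilde{\mathbf w}\circ\widetilde{\mathbf p}(t/\mu)}{\langle\widetilde{\mathbf w},\widetilde{\mathbf p}(t/\mu)\rangle},\qquad \mathbf Q(t):=\Big(\frac{q_i(t)}{\pi_i}\Big)_i .$$ Then $\langle\widetilde{\mathbf w},\widetilde{\mathbf p}(t)\rangle\neq0$ for all $t$, $\mathbf q$ solves $\frac{d\mathbf q}{dt}=(\mathbf K^\dagger-\mathbf I)\mathbf q$, $\mathbf Q$ solves $\frac{d\mathbf Q}{dt}=(\mathbf K-\mathbf I)\mathbf Q$, and $\langle\mathbf Q(t),\boldsymbol\pi\rangle=\langle\mathbf q(t),\mathbf 1\rangle=1$ for all $t$.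
   Context: Matrices are column-stochastic unless said otherwise; $\dagger$ is transpose, $\circ$ the entrywise product, $\operatorname{diag}(\mathbf a)$ the diagonal matrix with diagonal $\mathbf a$, $\mathbf 1$ the all-ones vector. For $1\le k<N-1$, an $(N+1)\times(N+1)$ column-stochastic $\mathbf M$ is $(N+1,k)$-admissible if, after a simultaneous permutation of rows and columns, $\mathbf M=\begin{pmatrix}\widetilde{\mathbf M}&\mathbf 0\\ \mathbf A&\mathbf I\end{pmatrix}$ with $\mathbf I$ the $k\times k$ identity, $\widetilde{\mathbf M}$ an irreducible $(N+1-k)\times(N+1-k)$ matrix (the core, acting on the transient states), and $\mathbf A$ a $k\times(N+1-k)$ matrix with no zero row. The characteristic triple $(\mu,\widetilde{\mathbf w},\widetilde{\mathbf z})$ consists of $\mu=\rho(\widetilde{\mathbf M})\in(0,1)$ and the positive left and right eigenvectors $\widetilde{\mathbf w},\widetilde{\mathbf z}$ of $\widetilde{\mathbf M}$ for $\mu$ normalised by $\langle\widetilde{\mathbf w},\mathbf 1\rangle=\langle\widetilde{\mathbf w},\widetilde{\mathbf z}\rangle=1$. $\mathbf M$ is micro-reversible if $\widetilde w_i\widetilde M_{ij}\widetilde z_j=\widetilde w_j\widetilde M_{ji}\widetilde z_i$ for all $i,j$. *)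

From HB Require Import structures.
From mathcomp Require Import all_boot all_order all_algebra.
From mathcomp Require Import all_classical all_reals all_analysis.
From mathcomp Require Import perm complex.
Set Implicit Arguments. Unset Strict Implicit. Unset Printing Implicit Defensive.
Import Order.TTheory GRing.Theory Num.Theory.
Local Open Scope ring_scope.

Section Defs.
Variable R : realType.

Definition col_stochastic (m : nat) (M : 'M[R]_m) : Prop :=
  (forall i j, 0 <= M i j) /\ (forall j, \sum_i M i j = 1).

Definition irreducible_mx (m : nat) (M : 'M[R]_m) : Prop :=
  (forall i j, 0 <= M i j) /\ (forall i j, exists e : nat, 0 < (M ^+ e) i j).

(* M (of size n + k = N+1) is (N+1,k)-admissible with core Mt : after a simultaneous
   permutation s of rows and columns, M = [[Mt, 0], [A, I]] with A without zero row. *)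
Definition admissible_core (n k : nat) (M : 'M[R]_(n + k)) (Mt : 'M[R]_n) : Prop :=
  col_stochastic M /\
  exists (s : {perm 'I_(n + k)}) (A : 'M[R]_(k, n)),
    row_perm s (col_perm s M) = block_mx Mt 0 A 1%:M
    /\ irreducible_mx Mt
    /\ (forall i : 'I_k, exists j : 'I_n, A i j != 0).

Definition cplx_eigenvalue (m : nat) (M : 'M[R]_m) (lam : complex R) : Prop :=
  eigenvalue (map_mx (real_complex R) M) lam.

Definition spectral_radius_is (m : nat) (M : 'M[R]_m) (mu : R) : Prop :=
  (exists lam, cplx_eigenvalue M lam /\ `|lam| = real_complex R mu)
  /\ (forall lam, cplx_eigenvalue M lam -> `|lam| <= real_complex R mu).

Definition dotc (m : nat) (u v : 'cV[R]_m) : R := \sum_i u i 0 * v i 0.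

Definition char_triple (m : nat) (Mt : 'M[R]_m) (mu : R) (w z : 'cV[R]_m) : Prop :=
  spectral_radius_is Mt mu /\ 0 < mu < 1
  /\ (forall i, 0 < w i 0) /\ (forall i, 0 < z i 0)
  /\ Mt^T *m w = mu *: w /\ Mt *m z = mu *: z
  /\ dotc w (const_mx 1) = 1 /\ dotc w z = 1.

Definition micro_reversible (m : nat) (Mt : 'M[R]_m) (w z : 'cV[R]_m) : Prop :=
  forall i j, w i 0 * Mt i j * z j 0 = w j 0 * Mt j i * z i 0.

Definition diagc (m : nat) (w : 'cV[R]_m) : 'M[R]_m := diag_mx w^T.

Definition Kmx (m : nat) (Mt : 'M[R]_m) (mu : R) (w : 'cV[R]_m) : 'M[R]_m :=
  mu^-1 *: (invmx (diagc w) *m Mt^T *m diagc w).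

Definition hadamard (m : nat) (u v : 'cV[R]_m) : 'cV[R]_m := \col_i (u i 0 * v i 0).

End Defs.

From HB Require Import structures.
From mathcomp Require Import all_boot all_order all_algebra.
From mathcomp Require Import all_classical all_reals all_analysis.
From mathcomp Require Import perm complex ring.
Set Implicit Arguments. Unset Strict Implicit. Unset Printing Implicit Defensive.
Import Order.TTheory GRing.Theory Num.Theory numFieldNormedType.Exports.
Local Open Scope ring_scope.
Local Open Scope classical_set_scope.

(* Since w is a left eigenvector of Mt for mu, the weight f = <w, p> solves
   f' = (mu - 1) f, so f(t) = f(0) exp((mu - 1) t) > 0.  The normalised vector
   (w o p) / f then moves by mu (K^T - I), because
   K^T (w o u) = mu^-1 w o (Mt u); running time at speed 1/mu removes the
   factor mu.  Micro-reversibility is detailed balance pi_i K_ij = pi_j K_ji,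
   i.e. K diag(pi)^-1 = diag(pi)^-1 K^T, which carries the equation for q over
   to Q = q / pi. *)

Section matrix_calculus.
Context {R : realFieldType}.

Lemma cvg_mxP {T : Type} (F : set_system T) {FF : Filter F} m n
    (G : T -> 'M[R]_(m, n)) (L : 'M[R]_(m, n)) :
  G @ F --> L <-> forall i j, (fun x => G x i j) @ F --> L i j.
Proof.
split=> [GL i j|GL].
  exact: continuous_cvg _ (@coord_continuous _ _ _ i j L) GL.
apply/cvgrPdist_le => /= e e0; near=> x.
rewrite /Num.Def.normr/= mx_normrE (bigmax_le _ (ltW e0))//= => ij _.
rewrite !mxE/=; move: ij; near: x; apply: filter_forall => /= ij.
exact: ((cvgrPdist_le _ _).1 (GL ij.1 ij.2)).
Unshelve. all: by end_near. Qed.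

Lemma mulmx_continuous m n p (A : 'M[R]_(m, n)) :
  continuous (fun B : 'M[R]_(n, p) => A *m B).
Proof.
move=> B; apply/(@cvg_mxP _ _ (nbhs_filter B)) => i j; rewrite mxE.
under eq_cvg do rewrite mxE.
apply: (cvg_big add_continuous) => l _.
exact: cvgMl_tmp (@coord_continuous _ _ _ l j B).
Qed.

Context {V : normedModType R}.

Lemma is_derive_mxP m n (G : V -> 'M[R]_(m, n)) t v (dG : 'M[R]_(m, n)) :
  is_derive t v G dG <-> forall i j, is_derive t v (fun s => G s i j) (dG i j).
Proof.
split=> [[/derivable_mxP dGij <-] i j|GdG].
  by apply: DeriveDef => //; rewrite derive_mx ?mxE//; exact/derivable_mxP.
have dGt : derivable G t v by apply/derivable_mxP => i j; case: (GdG i j).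
apply: DeriveDef => //; apply/matrixP => i j; rewrite derive_mx // mxE.
by case: (GdG i j).
Qed.

Lemma is_derive_mulmx m n p (A : 'M[R]_(m, n)) (G : V -> 'M[R]_(n, p)) t v dG :
  is_derive t v G dG -> is_derive t v (fun s => A *m G s) (A *m dG).
Proof.
move/is_derive_mxP => GdG; apply/is_derive_mxP => i j; rewrite mxE.
have -> : (fun s => (A *m G s) i j) = \sum_l (fun s => A i l * G s l j).
  by apply/funext => s; rewrite fct_sumE mxE.
by apply: is_derive_sum => l; exact: is_deriveZ.
Qed.

Lemma is_derive_scalemx m n (k : V -> R) (G : V -> 'M[R]_(m, n)) t v dk dG :
  is_derive t v k dk -> is_derive t v G dG ->
  is_derive t v (fun s => k s *: G s) (k t *: dG + dk *: G t).
Proof.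
move=> kdk /is_derive_mxP GdG; apply/is_derive_mxP => i j.
under [fun s => _]funext => s do rewrite mxE.
apply: is_derive_eq (is_deriveM kdk (GdG i j)) _.
by rewrite !mxE /GRing.scale /=; ring.
Qed.

End matrix_calculus.

Section real_variable.
Context {R : realType}.

Lemma is_derive_rescale m n (G : R -> 'M[R]_(m, n)) (c t : R) dG :
  is_derive (t / c) 1 G dG -> is_derive t 1 (fun s => G (s / c)) (c^-1 *: dG).
Proof.
move/is_derive_mxP => GdG; apply/is_derive_mxP => i j.
have div_c : is_derive t 1 (fun s => s / c) c^-1.
  apply: is_derive_eq (is_deriveM (is_derive_id t 1) (is_derive_cst c^-1 t 1)) _.
  by rewrite scaler0 add0r /GRing.scale /= mulr1.
apply: is_derive_eq (is_derive1_comp (g := fun s => s / c) (GdG i j) div_c) _.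
by rewrite mxE mulrC.
Qed.

Lemma continuous_within_ge0_rescale (T : topologicalType) (g : R -> T) (c : R) :
  0 < c -> {within [set x | 0 <= x], continuous g} ->
  {within [set x | 0 <= x], continuous (fun t => g (t / c))}.
Proof.
move=> c0 /subspace_continuousP cg; apply/subspace_continuousP => x x0.
have xc0 : 0 <= x / c by rewrite divr_ge0 // ltW.
apply: (cvg_comp (fun t => t / c) g _ (cg _ xc0)) => P /= Px.
have : nbhs x (fun y => 0 <= y / c -> P (y / c)) := @mulrr_continuous _ c^-1 x _ Px.
by apply: filterS => y Py y0; apply: Py; rewrite /= divr_ge0 // ltW.
Qed.

Lemma linear_ode_expR (f : R -> R) (a : R) :
  {within [set x | 0 <= x], continuous f} ->
  (forall t : R, 0 < t -> is_derive t 1 f (a * f t)) ->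
  forall t : R, 0 <= t -> f t = f 0 * expR (a * t).
Proof.
move=> cf df t; rewrite le_eqVlt => /predU1P[<-|t0]; first by rewrite mulr0 expR0 mulr1.
pose g s := f s * expR (- a * s).
have dg s : s \in `]0, t[%R -> is_derive s 1 g 0.
  rewrite in_itv /= => /andP[s0 _].
  have dlin : is_derive s 1 (fun s => - a * s) (- a).
    apply: is_derive_eq (is_deriveZ (- a) (is_derive_id s 1)) _.
    by rewrite /GRing.scale /= mulr1.
  have dexp := is_derive1_comp (g := fun s => - a * s) (is_derive_expR _) dlin.
  apply: is_derive_eq (is_deriveM (df s s0) dexp) _.
  by rewrite /GRing.scale /=; ring.
have cg : {within `[0, t], continuous g}.
  apply: continuous_subspaceW (_ : `[0, t] `<=` [set x | 0 <= x]) _.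
    by move=> x /=; rewrite in_itv /= => /andP[].
  move=> x; apply: cvgM; first exact: cf.
  apply: continuous_subspaceT => y.
  apply: (continuous_comp (f := fun s => - a * s)); first exact: mulrl_continuous.
  exact: continuous_expR.
have [c _] := MVT_segment (ltW t0) dg cg.
rewrite mul0r => /eqP; rewrite subr_eq0 => /eqP gtg0.
have -> : f t = g t * expR (a * t) by rewrite /g -mulrA -expRD mulNr addNr expR0 mulr1.
by rewrite gtg0 /g mulr0 expR0 mulr1.
Qed.

End real_variable.

Section vectors.
Context {R : realType} {n : nat}.
Implicit Types (u v w : 'cV[R]_n).

Lemma dotcE u v : dotc u v = (u^T *m v) 0 0.
Proof. by rewrite mxE; apply: eq_bigr => i _; rewrite mxE. Qed.

Lemma dotc_continuous w : continuous (dotc w).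
Proof.
move=> u; rewrite (_ : dotc w = (fun x : 'M[R]_1 => x 0 0) \o mulmx w^T).
  by apply: continuous_comp; [exact: mulmx_continuous | exact: coord_continuous].
by apply/funext => v; rewrite dotcE.
Qed.

Lemma is_derive_dotc {V : normedModType R} w (G : V -> 'cV[R]_n) (t v : V) dG :
  is_derive t v G dG -> is_derive t v (fun s => dotc w (G s)) (dotc w dG).
Proof.
move=> /(is_derive_mulmx w^T) /is_derive_mxP /(_ 0 0).
by under [fun s => _]funext => s do rewrite -dotcE; rewrite -dotcE.
Qed.

Lemma dotc_gt0 w u : (forall i, 0 < w i 0) -> (forall i, 0 <= u i 0) -> u != 0 ->
  0 < dotc w u.
Proof.
move=> w_gt0 u_ge0; apply: contraNT; rewrite -leNgt => dotc_le0.
apply/eqP/matrixP => i j; rewrite ord1 mxE; apply/eqP.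
have wu_ge0 l : 0 <= w l 0 * u l 0 := mulr_ge0 (ltW (w_gt0 l)) (u_ge0 l).
have /psumr_eq0P wu0 : \sum_l w l 0 * u l 0 = 0.
  by apply/le_anti/andP; split => //; exact: sumr_ge0.
by have /eqP := wu0 (fun l _ => wu_ge0 l) i isT; rewrite mulf_eq0 gt_eqF.
Qed.

Lemma dotc_left_eigen (Mt : 'M[R]_n) (mu : R) w u : Mt^T *m w = mu *: w ->
  dotc w (Mt *m u) = mu * dotc w u.
Proof.
move=> eigen_w; rewrite !dotcE mulmxA.
by rewrite -[w^T *m Mt]trmxK trmx_mul trmxK eigen_w linearZ /= -scalemxAl mxE.
Qed.

Lemma hadamardE w u : hadamard w u = diagc w *m u.
Proof. by apply/matrixP => i j; rewrite ord1 mul_diag_mx !mxE. Qed.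

Lemma col_divE u v : \col_i (u i 0 / v i 0) = diagc (\col_i (v i 0)^-1) *m u.
Proof. by apply/matrixP => i j; rewrite ord1 mul_diag_mx !mxE mulrC. Qed.

Lemma dotc_col_div u v : (forall i, v i 0 != 0) ->
  dotc (\col_i (u i 0 / v i 0)) v = dotc u (const_mx 1).
Proof. by move=> v_neq0; apply: eq_bigr => i _; rewrite !mxE divfK ?mulr1. Qed.

Lemma invmx_diagc w : (forall i, w i 0 != 0) ->
  invmx (diagc w) = diagc (\col_i (w i 0)^-1).
Proof.
move=> w_neq0; have wwV : diagc w *m diagc (\col_i (w i 0)^-1) = 1%:M.
  apply/matrixP => i j; rewrite mul_diag_mx !mxE.
  by case: eqVneq => [->|_]; rewrite ?mulr1n ?divff ?mulr0n ?mulr0.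
have [w_unit _] := mulmx1_unit wwV.
by rewrite -[LHS]mulmx1 -wwV mulmxA mulVmx // mul1mx.
Qed.

Lemma detailed_balance_diagc (K : 'M[R]_n) (pi : 'cV[R]_n) :
  (forall i, pi i 0 != 0) -> (forall i j, pi i 0 * K i j = pi j 0 * K j i) ->
  K *m diagc (\col_i (pi i 0)^-1) = diagc (\col_i (pi i 0)^-1) *m K^T.
Proof.
move=> pi_neq0 balance; apply/matrixP => i j; rewrite mul_mx_diag mul_diag_mx !mxE.
rewrite -[K i j](mulKf (pi_neq0 i)) balance; field.
by rewrite !pi_neq0.
Qed.

End vectors.

Section Kmx.
Context {R : realType} {n : nat} (Mt : 'M[R]_n) (mu : R) (w : 'cV[R]_n).
Hypothesis w_neq0 : forall i, w i 0 != 0.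

Lemma KmxE : Kmx Mt mu w = \matrix_(i, j) (mu^-1 * ((w i 0)^-1 * Mt j i * w j 0)).
Proof.
apply/matrixP => i j.
by rewrite /Kmx invmx_diagc // /diagc mxE mul_mx_diag mxE mul_diag_mx !mxE.
Qed.

Lemma trmx_Kmx_hadamard u :
  (Kmx Mt mu w)^T *m hadamard w u = mu^-1 *: hadamard w (Mt *m u).
Proof.
apply/matrixP => i j; rewrite KmxE ord1 !mxE mulr_sumr big_distrr /=.
apply: eq_bigr => l _; rewrite !mxE -[LHS]mulrA; congr (_ * _); field.
by rewrite w_neq0.
Qed.

Lemma Kmx_detailed_balance z : micro_reversible Mt w z ->
  forall i j, hadamard w z i 0 * Kmx Mt mu w i j = hadamard w z j 0 * Kmx Mt mu w j i.
Proof.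
move=> rev i j; rewrite KmxE !mxE ![_ * (mu^-1 * _)]mulrCA; congr (_ * _).
transitivity (w j 0 * Mt j i * z i 0); first by field; rewrite w_neq0.
by rewrite -rev; field; rewrite w_neq0.
Qed.

End Kmx.

Section normalize.
Context {R : realType} {n : nat}.
Implicit Types (u w : 'cV[R]_n).

Definition normalize w u : 'cV[R]_n := (dotc w u)^-1 *: hadamard w u.

Lemma dotc_normalize w u : dotc w u != 0 -> dotc (normalize w u) (const_mx 1) = 1.
Proof.
move=> wu_neq0; rewrite /dotc -[RHS](mulVf wu_neq0) mulr_sumr.
by apply: eq_bigr => i _; rewrite !mxE mulr1.
Qed.

Lemma normalize_continuous w u : dotc w u != 0 -> {for u, continuous (normalize w)}.
Proof.
move=> wu_neq0; apply: (@cvgZ _ _ _ _ (nbhs_filter u)).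
  by apply: cvgV => //; exact: dotc_continuous.
rewrite (_ : hadamard w = mulmx (diagc w)); first exact: mulmx_continuous.
by apply/funext => v; rewrite hadamardE.
Qed.

Lemma is_derive_normalize w (G : R -> 'cV[R]_n) t dG :
  dotc w (G t) != 0 -> is_derive t 1 G dG ->
  is_derive t 1 (fun s => normalize w (G s))
    ((dotc w (G t))^-1 *: hadamard w dG
     - (dotc w dG / dotc w (G t)) *: normalize w (G t)).
Proof.
move=> wG_neq0 GdG.
have := is_derive_scalemx (is_deriveV wG_neq0 (is_derive_dotc w GdG))
  (is_derive_mulmx (diagc w) GdG).
under [fun s => _]funext => s do rewrite -hadamardE.
move=> dnormalize; apply: is_derive_eq dnormalize _.
rewrite /normalize -!hadamardE scalerA -scaleNr; congr (_ + _ *: _).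
by rewrite /GRing.scale /=; field.
Qed.

End normalize.

Section flow.
Context {R : realType} {n : nat} (Mt : 'M[R]_n) (mu : R) (w : 'cV[R]_n).
Hypothesis eigen_w : Mt^T *m w = mu *: w.

Lemma dotc_generator u : dotc w ((Mt - 1%:M) *m u) = (mu - 1) * dotc w u.
Proof.
rewrite mulmxBl mul1mx !dotcE mulmxBr mxE [X in _ + X]mxE -!dotcE.
by rewrite (dotc_left_eigen _ eigen_w) mulrBl mul1r.
Qed.

Variable p : R -> 'cV[R]_n.
Hypothesis p_cont : {within [set x : R | 0 <= x], continuous p}.
Hypothesis p_ode : forall t : R, 0 < t -> is_derive t 1 p ((Mt - 1%:M) *m p t).

Lemma dotc_flowE :
  forall t : R, 0 <= t -> dotc w (p t) = dotc w (p 0) * expR ((mu - 1) * t).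
Proof.
apply: linear_ode_expR => [|s s0].
  by apply: within_continuous_comp p_cont => u _; exact: dotc_continuous.
by apply: is_derive_eq (is_derive_dotc w (p_ode s0)) _; rewrite dotc_generator.
Qed.

Lemma dotc_flow_gt0 t : (forall i, 0 < w i 0) ->
  (forall i, 0 <= p 0 i 0) -> p 0 != 0 -> 0 <= t -> 0 < dotc w (p t).
Proof.
move=> w_gt0 p0_ge0 p0_neq0 t0.
by rewrite dotc_flowE // mulr_gt0 ?expR_gt0 // dotc_gt0.
Qed.

Lemma is_derive_normalize_flow t :
  (forall i, w i 0 != 0) -> mu != 0 -> 0 < t / mu -> dotc w (p (t / mu)) != 0 ->
  is_derive t 1 (fun t => normalize w (p (t / mu)))
    (((Kmx Mt mu w)^T - 1%:M) *m normalize w (p (t / mu))).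
Proof.
move=> w_neq0 mu_neq0 t_mu_gt0 wp_neq0.
have dq := is_derive_rescale (is_derive_normalize wp_neq0 (p_ode t_mu_gt0)).
apply: is_derive_eq dq _.
rewrite dotc_generator /normalize !mulmxBl !mul1mx -scalemxAr trmx_Kmx_hadamard //.
rewrite [hadamard w (_ - _)]hadamardE mulmxBr -!hadamardE.
rewrite !scalerBr !scalerA -addrA -opprD -scalerDl.
by congr (_ *: _ - _ *: _); field; rewrite ?wp_neq0 ?mu_neq0.
Qed.

End flow.

Theorem lemma4 (R : realType) (n k : nat)
  (M : 'M[R]_(n + k)) (Mt : 'M[R]_n) (mu : R) (w z : 'cV[R]_n)
  (p : R -> 'cV[R]_n) :
  (1 <= k)%N -> (k < (n + k).-1.-1)%N ->
  admissible_core M Mt ->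
  char_triple Mt mu w z ->
  micro_reversible Mt w z ->
  {within [set x : R | 0 <= x], continuous p} ->
  (forall t : R, 0 < t -> is_derive t 1 p ((Mt - 1%:M) *m p t)) ->
  (forall i, 0 <= p 0 i 0) -> p 0 != 0 ->
  let K := Kmx Mt mu w in
  let pi := hadamard w z in
  let q := fun t : R => (dotc w (p (t / mu)))^-1 *: hadamard w (p (t / mu)) in
  let Q := fun t : R => \col_i (q t i 0 / pi i 0) in
  (forall t : R, 0 <= t -> dotc w (p t) != 0)
  /\ {within [set x : R | 0 <= x], continuous q}
  /\ (forall t : R, 0 < t -> is_derive t 1 q ((K^T - 1%:M) *m q t))
  /\ {within [set x : R | 0 <= x], continuous Q}
  /\ (forall t : R, 0 < t -> is_derive t 1 Q ((K - 1%:M) *m Q t))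
  /\ (forall t : R, 0 <= t -> dotc (Q t) pi = 1 /\ dotc (q t) (const_mx 1) = 1).
Proof.
move=> _ _ _ [_ [/andP[mu_gt0 _] [w_gt0 [z_gt0 [eigen_w _]]]]] rev.
move=> p_cont p_ode p0_ge0 p0_neq0 K pi q Q.
have mu_neq0 : mu != 0 by rewrite gt_eqF.
have w_neq0 i : w i 0 != 0 by rewrite gt_eqF.
have pi_neq0 i : pi i 0 != 0 by rewrite mxE mulf_neq0 // gt_eqF.
have wp_neq0 (t : R) : 0 <= t -> dotc w (p t) != 0.
  by move=> t0; rewrite gt_eqF // (dotc_flow_gt0 eigen_w p_cont p_ode).
have rescale_ge0 (t : R) : 0 <= t -> 0 <= t / mu by move=> t0; rewrite divr_ge0 // ltW.
have q_cont : {within [set x : R | 0 <= x], continuous q}.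
  apply: (continuous_within_ge0_rescale (g := fun s => normalize w (p s))) => //.
  apply: within_continuous_comp p_cont => _ /set_mem[s s0 <-].
  exact: normalize_continuous (wp_neq0 s s0).
have q_ode (t : R) : 0 < t -> is_derive t 1 q ((K^T - 1%:M) *m q t).
  move=> t0; have s0 : 0 < t / mu by rewrite divr_gt0.
  have dq := is_derive_normalize_flow eigen_w p_ode w_neq0 mu_neq0 s0.
  exact: dq (wp_neq0 _ (ltW s0)).
have QE : Q = fun t => diagc (\col_i (pi i 0)^-1) *m q t.
  by apply/funext => t; rewrite /Q col_divE.
have balance := detailed_balance_diagc pi_neq0 (Kmx_detailed_balance mu w_neq0 rev).
split; first exact: wp_neq0.
split; first exact: q_cont.
split; first exact: q_ode.
split.
  rewrite QE; apply: within_continuous_comp q_cont => u _.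
  exact: mulmx_continuous.
split.
  rewrite QE => t t0; apply: is_derive_eq (is_derive_mulmx _ (q_ode t t0)) _.
  by rewrite !mulmxBl !mulmxBr !mul1mx !mulmxA balance.
move=> t /rescale_ge0 /wp_neq0 wq_neq0.
by rewrite /Q dotc_col_div // dotc_normalize.
Qed.
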